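(* Let $\varrho=\{\varrho_{t,T}\}_{t\in[0,T]}$ be a dynamic risk measure which is stochastically conditionally time-consistent, normalized, and translation invariant. Then $\varrho$ is time consistent, i.e. $\varrho_{t,T}(Z_T)=\varrho_{t,T}\big(\varrho_{r,T}(Z_T)\big)$ for all $0\le t\le r\le T$ and all $Z_T\in\mathcal Z_T$, and $\varrho$ has the local property, i.e. $\varrho_{t,T}(\mathbf 1_A Z_T)=\mathbf 1_A\,\varrho_{t,T}(Z_T)$ for all $t\in[0,T]$, $Z_T\in\mathcal Z_T$ and $A\in\mathcal F_t$.
   Context: Let $\mathcal X$ be a finite state space, $T>0$, and $\{X_t\}_{0\le t\le T}$ a continuous-time Markov chain with values in $\mathcal X$, starting at a fixed state $x_0$, with transition function $Q_{t,r}(y|x)=P(X_r=y\mid X_t=x)$, $0\le t<r\le T$, $x,y\in\mathcal X$. The transition rates $G_t(y|x)=\lim_{\tau\downarrow0}\frac1\tau[Q_{t,t+\tau}(y|x)-\delta_x(y)]$ are assumed to exist, be finite and be uniformly bounded over $t\in[0,T]$ ($\delta_x(y)=1$ if $y=x$, $0$ otherwise). For $0\le t<r\le T$ and $\xi\in\mathcal X$, $\Xi^{\xi}_{t,r}$ denotes the space of piecewise-constant right-continuous paths $[t,r]\to\mathcal X$ starting at $\xi$ (with the $\sigma$-algebra generated by finite-dimensional cylinders), $P^{\xi}_{t,r}$ the law on it of the chain started at $\xi$ at time $t$, and $\Xi_{0,t}=\bigcup_{\xi}\Xi^{\xi}_{0,t}$. $\{\mathcal F_t\}$ is the filtration generated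 by $X$, and $\mathcal Z_t$ is the space of bounded $\mathcal F_t$-measurable random variables, each identified with a measurable functional of the path $\xi_{[0,t]}$. A conditional risk measure is a mapping $\varrho_{t,T}:\mathcal Z_T\to\mathcal Z_t$; a dynamic risk measure is a family $\varrho=\{\varrho_{t,T}\}_{t\in[0,T]}$ of them. It is normalized if $\varrho_{t,T}(0)=0$ for all $t$; translation invariant if $\varrho_{t,T}(Z_t+Z_T)=Z_t+\varrho_{t,T}(Z_T)$ for all $Z_t\in\mathcal Z_t$, $Z_T\in\mathcal Z_T$, $t\in[0,T]$. For a fixed history $\xi_{[0,t]}\in\Xi_{0,t}$ and $r\in[t,T]$, $\varrho_{r,T}(Z_T)\mid\xi_{[0,t]}$ denotes the random variable $\varrho_{r,T}(Z_T)$ regarded as a function of the path on $[t,r]$ that continues $\xi_{[0,t]}$, with the distribution induced by $P^{\xi_t}_{t,r}$; $\varrho_{t,T}(Z_T)(\xi_{[0,t]})$ denotes the value of $\varrho_{t,T}(Z_T)$ at the history $\xi_{[0,t]}$. For random variables $U,V$ (possibly on different probability spaces), $U\preceq_{\rm st}V$ means $P(U>\eta)\le P(V>\eta)$ for all $\eta\in\mathbb R$. The dynamic risk measure $\varrho$ is stochastically conditionally time-consistent if for all $0\le t\le r\le T$, all $\xi_{[0,t]}\in\Xi_{0,t}$ and all $Z_T,W_T\in\mathcal Z_T$, the relation $\varrho_{r,T}(Z_T)\mid\xi_{[0,t]}\preceq_{\rm st}\varrho_{r,T}(W_T)\mid\xi_{[0,t]}$ implies $\varrho_{t,T}(Z_T)(\xi_{[0,t]})\le\varrho_{t,T}(W_T)(\xi_{[0,t]})$.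 *)

From Stdlib Require Import Reals Lra List Classical ClassicalEpsilon
  FunctionalExtensionality PropExtensionality.
Open Scope R_scope.

Definition is_sigma_algebra {A : Type} (M : (A -> Prop) -> Prop) : Prop :=
  M (fun _ => True) /\
  (forall E, M E -> M (fun a => ~ E a)) /\
  (forall En : nat -> A -> Prop, (forall n, M (En n)) ->
     M (fun a => exists n, En n a)).

Definition generated {A : Type} (G : (A -> Prop) -> Prop) (E : A -> Prop) : Prop :=
  forall M, is_sigma_algebra M -> (forall F, G F -> M F) -> M E.

Definition is_prob_measure {A : Type} (M : (A -> Prop) -> Prop)
  (mu : (A -> Prop) -> R) : Prop :=
  (forall E, M E -> 0 <= mu E) /\
  mu (fun _ => True) = 1 /\
  (forall En : nat -> A -> Prop, (forall n, M (En n)) ->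
     (forall n m a, n <> m -> En n a -> En m a -> False) ->
     Un_cv (fun N => sum_f_R0 (fun k => mu (En k)) N)
           (mu (fun a => exists n, En n a))).

Definition measurable_fun {A : Type} (M : (A -> Prop) -> Prop) (Z : A -> R) : Prop :=
  forall c : R, M (fun a => c < Z a).

Definition bounded_fun {A : Type} (Z : A -> R) : Prop :=
  exists K, forall a, Rabs (Z a) <= K.

Definition delta {X : Type} (x y : X) : R :=
  if excluded_middle_informative (x = y) then 1 else 0.

Definition indicator {A : Type} (E : A -> Prop) (a : A) : R :=
  if excluded_middle_informative (E a) then 1 else 0.

(* f, restricted to [t,r], is piecewise constant and right-continuous with
   finitely many jumps (all jumps lie in the finite list l);
   outside [t,r] f is extended constantly (canonical representative). *)
Definition pc_on {X : Type} (t r : R) (f : R -> X) : Prop :=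
  (forall s, s < t -> f s = f t) /\
  (forall s, r < s -> f s = f r) /\
  exists l : list R, forall s s', t <= s -> s <= s' -> s' <= r ->
    (forall u, In u l -> ~ (s < u /\ u <= s')) -> f s = f s'.

Definition Xi0 (X : Type) (T : R) := { f : R -> X | pc_on 0 T f }.

Definition Xi (X : Type) (t r : R) (xi : X) := { f : R -> X | pc_on t r f /\ f t = xi }.

Definition Ft {X : Type} (T t : R) : (Xi0 X T -> Prop) -> Prop :=
  generated (fun E => exists s y, 0 <= s <= t /\
                        forall w, E w <-> proj1_sig w s = y).

Definition cyl {X : Type} (t r : R) (xi : X) : (Xi X t r xi -> Prop) -> Prop :=
  generated (fun E => exists s y, t <= s <= r /\
                        forall w, E w <-> proj1_sig w s = y).

Definition Zsp {X : Type} (T t : R) (Z : Xi0 X T -> R) : Prop :=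
  bounded_fun Z /\ measurable_fun (Ft T t) Z.

Definition canon {X : Type} {T : R} (d : Xi0 X T) (f : R -> X) : Xi0 X T :=
  match excluded_middle_informative (pc_on 0 T f) with
  | left H => exist _ f H
  | right _ => d
  end.

(* the path equal to the history w on [0,t) and to eta from t on
   (eta is a path on [t,r] with eta t = w t; it is constant after r) *)
Definition concat {X : Type} {T : R} (w : Xi0 X T) (t : R) (eta : R -> X) : Xi0 X T :=
  canon w (fun s => if Rlt_dec s t then proj1_sig w s else eta s).

Definition st_le {A B : Type} (mu : (A -> Prop) -> R) (U : A -> R)
  (nu : (B -> Prop) -> R) (V : B -> R) : Prop :=
  forall eta : R, mu (fun a => eta < U a) <= nu (fun b => eta < V b).

Fixpoint incr_times {X : Type} (s0 : R) (l : list (R * X)) : Prop :=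
  match l with
  | nil => True
  | (s, _) :: l' => s0 < s /\ incr_times s l'
  end.

Fixpoint fdd_prob {X : Type} (Q : R -> R -> X -> X -> R) (s0 : R) (y0 : X)
  (l : list (R * X)) : R :=
  match l with
  | nil => 1
  | (s, y) :: l' => Q s0 s y0 y * fdd_prob Q s y l'
  end.

(* P t r xi is the law of the chain started at xi at time t, on Xi^xi_{t,r};
   Q s r x y = P(X_r = y | X_s = x); G the transition rates *)
Definition markov_laws {X : Type} (T : R) (Q : R -> R -> X -> X -> R)
  (G : R -> X -> X -> R)
  (P : forall (t r : R) (xi : X), (Xi X t r xi -> Prop) -> R) : Prop :=
  (forall t r xi, 0 <= t <= r -> r <= T -> is_prob_measure (cyl t r xi) (P t r xi)) /\
  (forall t r xi (l : list (R * X)), 0 <= t -> t <= r -> r <= T -> incr_times t l ->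
     Forall (fun p => fst p <= r) l ->
     P t r xi (fun w => Forall (fun p => proj1_sig w (fst p) = snd p) l)
       = fdd_prob Q t xi l) /\
  (forall t x y, 0 <= t <= T ->
     forall eps, 0 < eps -> exists dl, 0 < dl /\
       forall tau, 0 < tau < dl -> t + tau <= T ->
         Rabs ((Q t (t + tau) x y - delta x y) / tau - G t x y) < eps) /\
  (exists K, forall t x y, 0 <= t <= T -> Rabs (G t x y) <= K).

(* rho t : Z_T -> Z_t, i.e. rho t = rho_{t,T} *)
Definition dyn_risk_measure {X : Type} (T : R)
  (rho : R -> (Xi0 X T -> R) -> (Xi0 X T -> R)) : Prop :=
  forall t Z, 0 <= t <= T -> Zsp T T Z -> Zsp T t (rho t Z).

Definition normalized {X : Type} (T : R)
  (rho : R -> (Xi0 X T -> R) -> (Xi0 X T -> R)) : Prop :=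
  forall t, 0 <= t <= T -> forall w, rho t (fun _ => 0) w = 0.

Definition translation_invariant {X : Type} (T : R)
  (rho : R -> (Xi0 X T -> R) -> (Xi0 X T -> R)) : Prop :=
  forall t Zt ZT, 0 <= t <= T -> Zsp T t Zt -> Zsp T T ZT ->
    forall w, rho t (fun v => Zt v + ZT v) w = Zt w + rho t ZT w.

(* the history xi_[0,t] is represented by any w in Xi_{0,T} (through its
   restriction to [0,t]); rho_{r,T}(Z) | xi_[0,t] is the r.v.
   eta |-> rho r Z (concat w t eta) on (Xi^{w t}_{t,r}, P t r (w t)) *)
Definition stoch_cond_time_consistent {X : Type} (T : R)
  (P : forall (t r : R) (xi : X), (Xi X t r xi -> Prop) -> R)
  (rho : R -> (Xi0 X T -> R) -> (Xi0 X T -> R)) : Prop :=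
  forall t r, 0 <= t -> t <= r -> r <= T ->
  forall (w : Xi0 X T) Z W, Zsp T T Z -> Zsp T T W ->
    st_le (P t r (proj1_sig w t))
          (fun eta => rho r Z (concat w t (proj1_sig eta)))
          (P t r (proj1_sig w t))
          (fun eta => rho r W (concat w t (proj1_sig eta))) ->
    rho t Z w <= rho t W w.

(* Stochastic conditional time consistency, applied in both directions to two
   positions whose conditional distributions coincide, says that rho_{t,T}
   depends on a position only through the values of rho_{r,T} along the
   continuations of the current history.  Normalization and translation
   invariance make rho_{r,T} the identity on Z_r.  Time consistency follows
   because rho_{r,T}(rho_{r,T} Z) = rho_{r,T} Z, and the local property because
   the indicator of an F_t-event is constant along the continuations of a
   history up to time t. *)
From Pilot Require Import Defs.
From Stdlib Require Import Reals List Lra Classical ClassicalEpsilon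
  FunctionalExtensionality PropExtensionality.
Open Scope R_scope.

Section SigmaAlgebra.

Variables (A : Type) (M : (A -> Prop) -> Prop).

Lemma sigma_ext (E F : A -> Prop) : M E -> (forall a, E a <-> F a) -> M F.
Proof.
  intros HE HEF. replace F with E; auto.
  apply functional_extensionality; intro a; apply propositional_extensionality; auto.
Qed.

Hypothesis HM : is_sigma_algebra M.

Lemma sigma_const (C : Prop) : M (fun _ => C).
Proof.
  destruct HM as [Htop [Hcompl _]]. destruct (classic C) as [HC | HC].
  - apply (sigma_ext (fun _ => True)); tauto.
  - apply (sigma_ext (fun _ => ~ True)); auto; tauto.
Qed.

Lemma sigma_union (E F : A -> Prop) : M E -> M F -> M (fun a => E a \/ F a).
Proof.
  destruct HM as [_ [_ Hunion]]. intros HE HF.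
  apply (sigma_ext (fun a => exists n, (if Nat.eqb n 0 then E else F) a)).
  - apply Hunion. intro n; destruct (Nat.eqb n 0); auto.
  - intro a; split.
    + intros [n Hn]; destruct (Nat.eqb n 0); auto.
    + intros [H | H]; [exists 0%nat | exists 1%nat]; auto.
Qed.

Lemma sigma_inter (E F : A -> Prop) : M E -> M F -> M (fun a => E a /\ F a).
Proof.
  pose proof HM as [_ [Hcompl _]]. intros HE HF.
  apply (sigma_ext (fun a => ~ (~ E a \/ ~ F a))).
  - apply Hcompl, sigma_union; auto.
  - intro a; split.
    + intro H; split; apply NNPP; tauto.
    + tauto.
Qed.

Lemma measurable_indicator_mul (E : A -> Prop) (Z : A -> R) :
  M E -> measurable_fun M Z -> measurable_fun M (fun a => indicator E a * Z a).
Proof.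
  pose proof HM as [_ [Hcompl _]]. intros HE HZ c.
  apply (sigma_ext (fun a => (E a /\ c < Z a) \/ (~ E a /\ c < 0))).
  - apply sigma_union; apply sigma_inter; auto using sigma_const.
  - intro a; unfold indicator.
    destruct (excluded_middle_informative (E a)) as [Ha | Ha].
    + rewrite Rmult_1_l; tauto.
    + rewrite Rmult_0_l; tauto.
Qed.

End SigmaAlgebra.

Lemma generated_sigma_algebra {A : Type} (G : (A -> Prop) -> Prop) :
  is_sigma_algebra (generated G).
Proof.
  split; [| split].
  - intros M HM _. apply HM.
  - intros E HE M HM HG. apply HM, HE; auto.
  - intros En HEn M HM HG. apply HM. intro n; apply HEn; auto.
Qed.

Section Filtration.

Variables (X : Type) (T : R).

Lemma Ft_mono (t t' : R) (E : Xi0 X T -> Prop) : t <= t' -> Ft T t E -> Ft T t' E.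
Proof.
  intros Htt' HE M HM HG. apply HE; auto.
  intros F [s [y [Hs HF]]]. apply HG. exists s, y; split; auto; lra.
Qed.

Definition agree_upto (t : R) (w w' : Xi0 X T) : Prop :=
  forall s, 0 <= s <= t -> proj1_sig w s = proj1_sig w' s.

Lemma Ft_agree_upto (t : R) (E : Xi0 X T -> Prop) (w w' : Xi0 X T) :
  Ft T t E -> agree_upto t w w' -> (E w <-> E w').
Proof.
  intros HE. revert w w'.
  apply (HE (fun E => forall w w', agree_upto t w w' -> (E w <-> E w'))).
  - split; [| split].
    + tauto.
    + intros F HF w w' Hw. specialize (HF w w' Hw). tauto.
    + intros En HEn w w' Hw.
      split; intros [n Hn]; exists n; specialize (HEn n w w' Hw); tauto.
  - intros F [s [y [Hs HF]]] w w' Hw. rewrite !HF, (Hw s Hs). tauto.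
Qed.

Lemma concat_agree_upto (t : R) (w : Xi0 X T) (eta : R -> X) :
  eta t = proj1_sig w t -> agree_upto t w (Defs.concat w t eta).
Proof.
  intros Heta s Hs. unfold Defs.concat, canon.
  destruct (excluded_middle_informative _); simpl; auto.
  destruct (Rlt_dec s t); auto.
  replace s with t by lra. auto.
Qed.

Lemma Ft_const_on_continuations (t r : R) (E : Xi0 X T -> Prop) (w : Xi0 X T)
  (eta : Xi X t r (proj1_sig w t)) :
  Ft T t E -> (E (Defs.concat w t (proj1_sig eta)) <-> E w).
Proof.
  intros HE. symmetry. apply (Ft_agree_upto t); auto.
  apply concat_agree_upto, (proj2 (proj2_sig eta)).
Qed.

Lemma Zsp_const (t c : R) : Zsp (X := X) T t (fun _ => c).
Proof.
  split.
  - exists (Rabs c); intro; apply Rle_refl.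
  - intro d. apply sigma_const, generated_sigma_algebra.
Qed.

Lemma Zsp_mono (t t' : R) (Z : Xi0 X T -> R) : t <= t' -> Zsp T t Z -> Zsp T t' Z.
Proof.
  intros Htt' [Hb Hm]. split; auto. intro c. apply (Ft_mono t); auto.
Qed.

Lemma Zsp_indicator_mul (t : R) (E : Xi0 X T -> Prop) (Z : Xi0 X T -> R) :
  Ft T t E -> Zsp T t Z -> Zsp T t (fun v => indicator E v * Z v).
Proof.
  intros HE [[K HK] Hm]. split.
  - exists (Rabs K). intro a. unfold indicator.
    destruct (excluded_middle_informative (E a)).
    + rewrite Rmult_1_l. specialize (HK a). pose proof (Rle_abs K). lra.
    + rewrite Rmult_0_l, Rabs_R0. apply Rabs_pos.
  - apply measurable_indicator_mul; auto. apply generated_sigma_algebra.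
Qed.

End Filtration.

Lemma st_le_refl {A : Type} (mu : (A -> Prop) -> R) (U : A -> R) : st_le mu U mu U.
Proof. intro; apply Rle_refl. Qed.

Section RiskMeasure.

Variables (X : Type) (T : R) (P : forall (t r : R) (xi : X), (Xi X t r xi -> Prop) -> R)
  (rho : R -> (Xi0 X T -> R) -> (Xi0 X T -> R)).

Lemma rho_adapted_id (r : R) (Z : Xi0 X T -> R) (v : Xi0 X T) :
  normalized T rho -> translation_invariant T rho ->
  0 <= r <= T -> Zsp T r Z -> rho r Z v = Z v.
Proof.
  intros Hnorm Htrans Hr HZ.
  pose proof (Htrans r Z (fun _ => 0) Hr HZ (Zsp_const X T T 0) v) as H.
  rewrite (Hnorm r Hr v), Rplus_0_r in H.
  replace (fun v => Z v + 0) with Z in H by (apply functional_extensionality; intro; ring).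
  exact H.
Qed.

Hypothesis Hsct : stoch_cond_time_consistent T P rho.

Lemma rho_eq_of_eq_on_continuations (t r : R) (w : Xi0 X T) (Z W : Xi0 X T -> R) :
  0 <= t -> t <= r -> r <= T -> Zsp T T Z -> Zsp T T W ->
  (forall eta : Xi X t r (proj1_sig w t),
     rho r Z (Defs.concat w t (proj1_sig eta))
     = rho r W (Defs.concat w t (proj1_sig eta))) ->
  rho t Z w = rho t W w.
Proof.
  intros Ht Htr HrT HZ HW Heq.
  assert (Hfun : (fun eta : Xi X t r (proj1_sig w t) =>
                   rho r Z (Defs.concat w t (proj1_sig eta)))
               = (fun eta => rho r W (Defs.concat w t (proj1_sig eta))))
    by (apply functional_extensionality; exact Heq).
  apply Rle_antisym; apply (Hsct t r); auto; rewrite Hfun; apply st_le_refl.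
Qed.

Hypotheses (Hrho : dyn_risk_measure T rho) (Hnorm : normalized T rho)
  (Htrans : translation_invariant T rho).

Lemma rho_time_consistent (t r : R) (Z : Xi0 X T -> R) (w : Xi0 X T) :
  0 <= t -> t <= r -> r <= T -> Zsp T T Z -> rho t Z w = rho t (rho r Z) w.
Proof.
  intros Ht Htr HrT HZ.
  assert (HZr : Zsp T r (rho r Z)) by (apply Hrho; auto; lra).
  apply (rho_eq_of_eq_on_continuations t r); auto.
  - apply (Zsp_mono X T r); auto.
  - intro eta. symmetry. apply rho_adapted_id; auto; lra.
Qed.

Lemma rho_eq_of_terminal_eq_on_continuations (t : R) (w : Xi0 X T) (Z W : Xi0 X T -> R) :
  0 <= t <= T -> Zsp T T Z -> Zsp T T W ->
  (forall eta : Xi X t T (proj1_sig w t),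
     Z (Defs.concat w t (proj1_sig eta)) = W (Defs.concat w t (proj1_sig eta))) ->
  rho t Z w = rho t W w.
Proof.
  intros Ht HZ HW Heq.
  apply (rho_eq_of_eq_on_continuations t T); auto; try lra.
  intro eta. rewrite !(rho_adapted_id T); auto; lra.
Qed.

Lemma rho_local (t : R) (Z : Xi0 X T -> R) (E : Xi0 X T -> Prop) (w : Xi0 X T) :
  0 <= t <= T -> Zsp T T Z -> Ft T t E ->
  rho t (fun v => indicator E v * Z v) w = indicator E w * rho t Z w.
Proof.
  intros Ht HZ HE.
  assert (HEZ : Zsp T T (fun v => indicator E v * Z v))
    by (apply Zsp_indicator_mul; auto; apply (Ft_mono X T t); tauto).
  assert (Hcont : forall eta : Xi X t T (proj1_sig w t),
            indicator E (Defs.concat w t (proj1_sig eta)) = indicator E w).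
  { intro eta. unfold indicator.
    pose proof (Ft_const_on_continuations X T t T E w eta HE).
    destruct (excluded_middle_informative (E w)),
             (excluded_middle_informative (E _)); tauto. }
  unfold indicator at 2. destruct (excluded_middle_informative (E w)) as [Hw | Hw].
  - rewrite Rmult_1_l. apply rho_eq_of_terminal_eq_on_continuations; auto.
    intro eta. rewrite Hcont. unfold indicator.
    destruct (excluded_middle_informative (E w)); [ring | contradiction].
  - rewrite Rmult_0_l, <- (Hnorm t Ht w).
    apply rho_eq_of_terminal_eq_on_continuations; auto using Zsp_const.
    intro eta. rewrite Hcont. unfold indicator.
    destruct (excluded_middle_informative (E w)); [contradiction | ring].
Qed.

End RiskMeasure.

Theorem theorem3p2 (X : Type) (enum : list X) (Henum : forall x : X, In x enum)
  (x0 : X) (T : R) (HT : 0 < T)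
  (Q : R -> R -> X -> X -> R) (G : R -> X -> X -> R)
  (P : forall (t r : R) (xi : X), (Xi X t r xi -> Prop) -> R)
  (HP : markov_laws T Q G P)
  (rho : R -> (Xi0 X T -> R) -> (Xi0 X T -> R))
  (Hrho : dyn_risk_measure T rho)
  (Hsct : stoch_cond_time_consistent T P rho)
  (Hnorm : normalized T rho)
  (Htrans : translation_invariant T rho) :
  (forall t r, 0 <= t -> t <= r -> r <= T ->
     forall Z, Zsp T T Z -> forall w, rho t Z w = rho t (rho r Z) w) /\
  (forall t, 0 <= t <= T -> forall Z (A : Xi0 X T -> Prop),
     Zsp T T Z -> Ft T t A ->
     forall w, rho t (fun v => indicator A v * Z v) w = indicator A w * rho t Z w).
Proof.
  split.
  - intros t r Ht Htr HrT Z HZ w. apply (rho_time_consistent X T P); auto.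
  - intros t Ht Z A HZ HA w. apply (rho_local X T P); auto.
Qed.
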